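(* Let $K\subset\mathbb{R}^n$ and $C\subset\mathbb{R}^m$ be nonempty, convex, closed and bounded sets, and let $f,h:\mathbb{R}^n\times\mathbb{R}^m\to\mathbb{R}$ be continuous functions such that, for every $y\in K$, $f(y,\cdot)$ and $h(y,\cdot)$ are convex, and such that $f$ takes only positive values. For every $\varepsilon>0$, the problem $(\mathcal{P}_\varepsilon)$: maximize $f(y,x)$ subject to $y\in K$, $x\in\mathcal{S}_\varepsilon(y)$, admits at least one optimal solution $y_\varepsilon\in K$.
   Context: For $y\in K$ and $\varepsilon>0$, $\mathcal{S}_\varepsilon(y)=\operatorname{argmin}\{h(y,z)+\varepsilon f^2(y,z)\mid z\in C\}$, where $f^2=(f)^2$. A point $y_\varepsilon\in K$ is an optimal solution of $(\mathcal{P}_\varepsilon)$ if $f(y_\varepsilon,x')\ge f(y,x)$ for all $x'\in\mathcal{S}_\varepsilon(y_\varepsilon)$, all $y\in K$ and all $x\in\mathcal{S}_\varepsilon(y)$ (the value $f(y,x)$ does not depend on the choice of $x\in\mathcal{S}_\varepsilon(y)$). *)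

From HB Require Import structures.
From mathcomp Require Import all_boot all_order all_algebra.
From mathcomp Require Import all_classical all_reals all_analysis.
Set Implicit Arguments. Unset Strict Implicit. Unset Printing Implicit Defensive.
Import Order.TTheory GRing.Theory Num.Theory.
Import numFieldNormedType.Exports.
Local Open Scope classical_set_scope.
Local Open Scope ring_scope.

Definition convex_set_rV (R : realType) (n : nat) (A : set 'rV[R]_n) : Prop :=
  forall x y : 'rV[R]_n, A x -> A y -> forall t : R, 0 <= t -> t <= 1 ->
    A (t *: x + (1 - t) *: y).

Definition convex_fun_rV (R : realType) (m : nat) (g : 'rV[R]_m -> R) : Prop :=
  forall x y : 'rV[R]_m, forall t : R, 0 <= t -> t <= 1 ->
    g (t *: x + (1 - t) *: y) <= t * g x + (1 - t) * g y.

Definition S_eps (R : realType) (n m : nat) (f h : 'rV[R]_n -> 'rV[R]_m -> R)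
  (C : set 'rV[R]_m) (eps : R) (y : 'rV[R]_n) : set 'rV[R]_m :=
  [set z | C z /\ forall z', C z' ->
     h y z + eps * (f y z) ^+ 2 <= h y z' + eps * (f y z') ^+ 2].

Definition optimal_P_eps (R : realType) (n m : nat) (f h : 'rV[R]_n -> 'rV[R]_m -> R)
  (K : set 'rV[R]_n) (C : set 'rV[R]_m) (eps : R) (ye : 'rV[R]_n) : Prop :=
  K ye /\ forall x', S_eps f h C eps ye x' ->
    forall y, K y -> forall x, S_eps f h C eps y x -> f y x <= f ye x'.

From HB Require Import structures.
From mathcomp Require Import all_boot all_order all_algebra.
From mathcomp Require Import all_classical all_reals all_analysis.
From mathcomp Require Import ring lra.
Set Implicit Arguments. Unset Strict Implicit. Unset Printing Implicit Defensive.
Import Order.TTheory GRing.Theory Num.Theory.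
Import numFieldNormedType.Exports.
Local Open Scope classical_set_scope.
Local Open Scope ring_scope.

(* For fixed y the penalised objective h(y,.) + eps f(y,.)^2 is convex, and the
   squared term is strictly convex in the value of f(y,.): at the midpoint of
   two minimisers it gains eps ((f y z1 - f y z2) / 2)^2 over the average, so
   f(y,.) takes a single value on S_eps(y).  The set of pairs (y, x) with
   y in K and x in S_eps(y) is closed in the compact K x C and nonempty by
   Weierstrass, so f attains its maximum on it at some (y_eps, x); every other
   x' in S_eps(y_eps) gives f the same value. *)

Lemma sqr_midpoint_le (R : realFieldType) (a b c : R) :
  0 <= c -> c <= (a + b) / 2 ->
  c ^+ 2 <= (a ^+ 2 + b ^+ 2) / 2 - ((a - b) / 2) ^+ 2.
Proof.
move=> c_ge0 c_le; have -> : (a ^+ 2 + b ^+ 2) / 2 - ((a - b) / 2) ^+ 2 =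
  ((a + b) / 2) ^+ 2 by rewrite !expr2; field.
by rewrite ler_pXn2r // ?nnegrE //; apply: le_trans c_le.
Qed.

Lemma S_eps_f_eq (R : realType) (n m : nat) (f h : 'rV[R]_n -> 'rV[R]_m -> R)
    (C : set 'rV[R]_m) (eps : R) (y : 'rV[R]_n) :
  convex_set_rV C -> convex_fun_rV (f y) -> convex_fun_rV (h y) ->
  (forall x, 0 <= f y x) -> 0 < eps ->
  forall z1 z2, S_eps f h C eps y z1 -> S_eps f h C eps y z2 -> f y z1 = f y z2.
Proof.
move=> convC convf convh f_ge0 eps_gt0 z1 z2 [Cz1 min1] [Cz2 min2].
have half_ge0 : (0 : R) <= 1 / 2 by lra.
have half_le1 : (1 / 2 : R) <= 1 by lra.
set mid := (1 / 2) *: z1 + (1 - 1 / 2) *: z2.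
have Cmid : C mid by exact: convC.
have hmid : h y mid <= (h y z1 + h y z2) / 2.
  by apply: le_trans (convh _ _ _ half_ge0 half_le1) _; lra.
have fmid : f y mid <= (f y z1 + f y z2) / 2.
  by apply: le_trans (convf _ _ _ half_ge0 half_le1) _; lra.
have gap := sqr_midpoint_le (f_ge0 mid) fmid.
have gap_eps := ler_wpM2l (ltW eps_gt0) gap.
have : eps * ((f y z1 - f y z2) / 2) ^+ 2 <= 0.
  by move: (min1 _ Cmid) (min1 _ Cz2) (min2 _ Cz1) hmid gap_eps; lra.
rewrite pmulr_rle0 // => sqr_le0.
have : ((f y z1 - f y z2) / 2) ^+ 2 == 0 by rewrite eq_le sqr_le0 sqr_ge0.
by rewrite sqrf_eq0 mulf_eq0 invr_eq0 pnatr_eq0 orbF subr_eq0 => /eqP.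
Qed.

Section ArgminGraph.
Variables (T U : topologicalType) (R : realType).

Lemma continuous_set_snd (z : U) : continuous (fun p : T * U => (p.1, z)).
Proof. by move=> p; apply: cvg_pair; [exact: cvg_fst | exact: cvg_cst]. Qed.

Lemma continuous_pairl (t : T) : continuous (fun z : U => (t, z)).
Proof. by move=> z; apply: cvg_pair; [exact: cvg_cst | exact: cvg_id]. Qed.

Lemma closed_argmin_graph (g : T * U -> R) (C : set U) :
  continuous g -> closed [set p | forall z, C z -> g p <= g (p.1, z)].
Proof.
move=> cg.
have -> : [set p | forall z, C z -> g p <= g (p.1, z)] =
    \bigcap_(z in C) ((fun p => g (p.1, z) - g p) @^-1` [set r | 0 <= r]).
  apply/seteqP; split=> p /= le_p z Cz; have := le_p z Cz;
  by rewrite /preimage /= subr_ge0.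
apply: closed_bigI => z _; apply: (continuous_closedP _).1 (@closed_ge R 0).
have cgz : continuous (fun p : T * U => g (p.1, z)).
  by move=> p; apply: continuous_comp; [exact: continuous_set_snd | exact: cg].
by move=> p; apply: cvgB; [exact: cgz | exact: cg].
Qed.

Lemma exists_argmin_slice (g : T * U -> R) (C : set U) (t : T) :
  continuous g -> C !=set0 -> compact C ->
  exists2 x, C x & forall z, C z -> g (t, x) <= g (t, z).
Proof.
move=> cg C0 compC.
have cgt : {within C, continuous (fun z => g (t, z))}.
  apply: continuous_subspaceT => z.
  by apply: continuous_comp; [exact: continuous_pairl | exact: cg].
have [x /set_mem Cx xmin] := compact_EVT_min C0 compC cgt.
by exists x => // z Cz; apply: xmin; exact: mem_set.
Qed.

End ArgminGraph.

Theorem theorem2p1 (R : realType) (n m : nat)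
  (K : set 'rV[R]_n) (C : set 'rV[R]_m)
  (f h : 'rV[R]_n -> 'rV[R]_m -> R) :
  K !=set0 -> convex_set_rV K -> closed K -> bounded_set K ->
  C !=set0 -> convex_set_rV C -> closed C -> bounded_set C ->
  continuous (fun p : 'rV[R]_n * 'rV[R]_m => f p.1 p.2) ->
  continuous (fun p : 'rV[R]_n * 'rV[R]_m => h p.1 p.2) ->
  (forall y, K y -> convex_fun_rV (f y) /\ convex_fun_rV (h y)) ->
  (forall y x, 0 < f y x) ->
  forall eps : R, 0 < eps -> exists ye, optimal_P_eps f h K C eps ye.
Proof.
move=> [y0 Ky0] _ clK bK C0 convC clC bC cf ch convfh f_gt0 eps eps_gt0.
pose g (p : 'rV[R]_n * 'rV[R]_m) := h p.1 p.2 + eps * f p.1 p.2 ^+ 2.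
have cg : continuous g.
  move=> p; apply: cvgD; first exact: ch.
  by apply: cvgM; [exact: cvg_cst | rewrite /GRing.exp /=; apply: cvgM; exact: cf].
have compC := bounded_closed_compact bC clC.
pose G := (K `*` C) `&` [set p | forall z, C z -> g p <= g (p.1, z)].
have compG : compact G.
  apply: compact_closedI; last exact: closed_argmin_graph.
  exact: compact_setX (bounded_closed_compact bK clK) compC.
have [x0 Cx0 x0min] := exists_argmin_slice y0 cg C0 compC.
have G0 : G !=set0 by exists (y0, x0).
have [[ye xe] /set_mem [[/= Kye Cxe] xe_min] fmax] :=
  compact_EVT_max G0 compG (continuous_subspaceT cf).
exists ye; split=> // x' Sx' y Ky x [Cx xmin].
have [convf convh] := convfh ye Kye.
have f_ge0 x'' : 0 <= f ye x'' by exact: ltW.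
rewrite -(S_eps_f_eq convC convf convh f_ge0 eps_gt0 (conj Cxe xe_min) Sx').
exact: (fmax (y, x) (mem_set (conj (conj Ky Cx) xmin))).
Qed.
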